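(* Let $U$ be a $5$-unitrade with $|U|=12$. Then either $U=W\cup W'$ where $W,W'$ are disjoint $5$-unitrades each equivalent to $W_5$, or $U$ is equivalent to $S=\{\{1,2,3,5,6\}, \{1,2,4,5,6\}, \{1,3,4,5,6\}, \{2,3,4,5,6\}, \{1,2,3,5,7\}, \{1,2,4,5,7\}, \{1,3,4,5,7\}, \{2,3,4,5,7\}, \{1,2,3,6,7\}, \{1,2,4,6,7\}, \{1,3,4,6,7\}, \{2,3,4,6,7\}\}$.
   Context: A $k$-unitrade on a finite set $V$ is a set $U$ of $k$-element subsets (blocks) of $V$ such that every $(k-1)$-element subset of $V$ is contained in an even number of blocks of $U$. Two collections $U_1$ of subsets of $V_1$ and $U_2$ of subsets of $V_2$ are equivalent if there is an injection $f:V_1\to V_2$ with $U_2=\{f(u): u\in U_1\}$. $W_5$ denotes the set of all $5$-element subsets of a $6$-element set. *)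

From mathcomp Require Import all_boot.
Set Implicit Arguments. Unset Strict Implicit. Unset Printing Implicit Defensive.

Definition unitrade (V : finType) (k : nat) (U : {set {set V}}) : Prop :=
  (forall B, B \in U -> #|B| = k) /\
  (forall T : {set V}, #|T| = k.-1 -> ~~ odd #|[set B in U | T \subset B]|).

Definition equivalent (V1 V2 : finType) (U1 : {set {set V1}}) (U2 : {set {set V2}}) : Prop :=
  exists f : V1 -> V2, injective f /\ U2 = [set f @: (B : {set V1}) | B in U1].

Definition W5 : {set {set 'I_6}} := [set B : {set 'I_6} | #|B| == 5].

(* The set S on {1,...,7}, with label i represented by (i-1 : 'I_7). *)
Definition lab (n : nat) : 'I_7 := inord n.-1.
Definition blk (a b c d e : nat) : {set 'I_7} := [set lab a; lab b; lab c; lab d; lab e].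

Definition S7 : {set {set 'I_7}} :=
  [set blk 1 2 3 5 6; blk 1 2 4 5 6; blk 1 3 4 5 6; blk 2 3 4 5 6;
       blk 1 2 3 5 7; blk 1 2 4 5 7; blk 1 3 4 5 7; blk 2 3 4 5 7;
       blk 1 2 3 6 7; blk 1 2 4 6 7; blk 1 3 4 6 7; blk 2 3 4 6 7].

From mathcomp Require Import all_boot zify.
Set Implicit Arguments. Unset Strict Implicit. Unset Printing Implicit Defensive.

(* A nonempty k-unitrade has more than k blocks, and exactly k+1 only when it
   is the family W_k(A) of all k-subsets of a (k+1)-set A: for a block B and
   x in B some other block contains B - x, and with only k+1 blocks these
   partners all add the same new point to B.  The link of a vertex is a
   (k-1)-unitrade, and the symmetric difference of two unitrades is one.
   By induction on k, a nonempty k-unitrade U with fewer than 2k blocks has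
   exactly k+1: if some link is minimal, U shares at least k blocks with some
   W_k(A), and the symmetric difference of U and W_k(A) is a nonempty unitrade
   that is too small; otherwise all degrees are at least 2(k-1), and double
   counting the incidences contradicts the bound on #|U|.
   For a 5-unitrade with 12 blocks, a vertex of degree 5 splits off a copy of
   W_5 and leaves another one.  Otherwise all degrees are at least 8, so the
   blocks lie on 7 points and their complements form a graph in which every
   triangle has an even number of edges.  Such a graph is complete bipartite,
   and 12 edges on 7 points force K_{4,3}, whose complement family is S. *)

Section SetFacts.
Variable T : finType.
Implicit Types A B X Y : {set T}.

Definition symdiff X Y := (X :\: Y) :|: (Y :\: X).

Lemma card_symdiff X Y : #|symdiff X Y| + 2 * #|X :&: Y| = #|X| + #|Y|.
Proof.
have XY0 : (X :\: Y) :&: (Y :\: X) = set0.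
  by apply/setP => u; rewrite !inE; case: (u \in X); case: (u \in Y).
have := cardsUI (X :\: Y) (Y :\: X); rewrite XY0 cards0 addn0 => ->.
have := cardsID Y X; have := cardsID X Y; rewrite setIC; lia.
Qed.

Lemma setU1_of_card A B :
  A \subset B -> #|B| = #|A|.+1 -> exists2 b, b \notin A & B = b |: A.
Proof.
move=> sAB cB; have /cards1P[b BAb] : #|B :\: A| == 1.
  by rewrite cardsD (setIidPr sAB) cB subSnn.
have /setDP[bB bA] : b \in B :\: A by rewrite BAb set11.
exists b => //; apply/setP => u; rewrite !inE.
case: (eqVneq u b) => [->|ub] //=; apply/idP/idP => [uB|]; last exact: subsetP.
apply: contraT => uA; have : u \in B :\: A by rewrite inE uA.
by rewrite BAb inE (negbTE ub).
Qed.

Lemma setD1C A a b : A :\ a :\ b = A :\ b :\ a.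
Proof. by apply/setP => t; rewrite !inE !andbA [(t != b) && _]andbC. Qed.

Lemma setUDK A B : A \subset B -> A :|: (B :\: A) = B.
Proof. by move=> sAB; rewrite setDE setUIr setUCr setIT (setUidPr sAB). Qed.

Lemma card_set_seq (s : seq T) (p : pred T) :
  uniq s -> #|[set t in s | p t]| = count p s.
Proof.
move=> s_uniq; rewrite -size_filter -(card_uniqP (filter_uniq p s_uniq)).
by apply: eq_card => t; rewrite inE mem_filter andbC.
Qed.

End SetFacts.

Lemma imsetD1 (T T' : finType) (f : T -> T') (A : {set T}) a :
  injective f -> f @: (A :\ a) = f @: A :\ f a.
Proof.
move=> f_inj; apply/setP => y; apply/imsetP/setD1P => [[x /setD1P[xa xA] ->]|].
  by rewrite (inj_eq f_inj) xa imset_f.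
case=> ya /imsetP[x xA yx]; exists x => //; rewrite !inE xA andbT.
by apply: contraNneq ya => xa; rewrite yx xa.
Qed.

Lemma imset_imset2 (T1 T2 T' T'' : finType) (g : T' -> T'') (F : T1 -> T2 -> T')
    (A1 : {set T1}) (A2 : {set T2}) :
  [set g B | B in [set F x y | x in A1, y in A2]] = [set g (F x y) | x in A1, y in A2].
Proof. by rewrite !curry_imset2X -imset_comp; apply: eq_imset => -[]. Qed.

Lemma imset2_imset (T1 T2 U1 U2 T' : finType) (F : U1 -> U2 -> T')
    (f1 : T1 -> U1) (f2 : T2 -> U2) (A1 : {set T1}) (A2 : {set T2}) :
  [set F (f1 x) (f2 y) | x in A1, y in A2] = [set F x y | x in f1 @: A1, y in f2 @: A2].
Proof.
apply/setP => z; apply/imset2P/imset2P => [[x y xA yA ->]|].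
  by exists (f1 x) (f2 y); rewrite ?imset_f.
by case=> _ _ /imsetP[x xA ->] /imsetP[y yA ->] ->; exists x y.
Qed.

Section Unitrades.
Variable V : finType.
Implicit Types (A B C P S T : {set V}) (U W : {set {set V}}).

Definition ksubsets A (k : nat) := [set B : {set V} | (B \subset A) && (#|B| == k)].
Definition star U v := [set B in U | v \in B].
Definition link U v := [set B :\ v | B in star U v].

Lemma unitrade_symdiff k U W : unitrade k U -> unitrade k W -> unitrade k (symdiff U W).
Proof.
move=> [U_card U_even] [W_card W_even]; split.
  by move=> B; rewrite !inE => /orP[/andP[_ /U_card]|/andP[_ /W_card]].
move=> T cT; set UT := [set B in U | T \subset B]; set WT := [set B in W | T \subset B].
have -> : [set B in symdiff U W | T \subset B] = symdiff UT WT.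
  by apply/setP => B; rewrite !inE; case: (B \in U); case: (B \in W); case: (T \subset B).
have /(congr1 odd) := card_symdiff UT WT.
by rewrite !oddD /= addbF addbb addbF (negbTE (U_even T cT)) (negbTE (W_even T cT)) => ->.
Qed.

Lemma ksubsets_succE A k : #|A| = k.+1 -> ksubsets A k = [set A :\ a | a in A].
Proof.
move=> cA; apply/setP => B; rewrite inE; apply/andP/imsetP => [[sBA /eqP cB]|[a aA ->]].
  have [a aB ->] := setU1_of_card sBA (etrans cA (congr1 _ (esym cB))).
  by exists a; rewrite ?setU11 ?setU1K.
by rewrite subD1set; have := cardsD1 a A; rewrite aA cA => -[->].
Qed.

Lemma card_ksubsets_succ A k : #|A| = k.+1 -> #|ksubsets A k| = k.+1.
Proof.
move=> cA; rewrite ksubsets_succE // card_in_imset ?cA // => a b aA bA ab.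
by move: (setD11 a A); rewrite ab !inE aA andbT => /negbFE/eqP.
Qed.

Lemma unitrade_ksubsets A k : 0 < k -> #|A| = k.+1 -> unitrade k (ksubsets A k).
Proof.
move=> k_gt0 cA; split=> [B|T cT]; first by rewrite inE => /andP[_ /eqP].
have [sTA|nsTA] := boolP (T \subset A); last first.
  suff -> : [set B in ksubsets A k | T \subset B] = set0 by rewrite cards0.
  apply/setP => B; rewrite !inE; apply: contraNF nsTA => /andP[/andP[sBA _] sTB].
  exact: subset_trans sTB sBA.
have -> : [set B in ksubsets A k | T \subset B] = [set a |: T | a in A :\: T].
  apply/setP => B; rewrite !inE; apply/andP/imsetP => [[/andP[sBA /eqP cB] sTB]|[a]].
    have cBT : #|B| = #|T|.+1 by rewrite cB cT (ltn_predK k_gt0).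
    have [a aT BaT] := setU1_of_card sTB cBT.
    by exists a => //; rewrite inE aT (subsetP sBA) // BaT setU11.
  rewrite inE => /andP[aT aA] ->; rewrite subsetUr cardsU1 aT cT subUset sub1set aA sTA.
  by rewrite /= add1n (ltn_predK k_gt0).
rewrite card_in_imset => [|a b]; last first.
  rewrite inE => /andP[aT _] _ ab; have : a \in b |: T by rewrite -ab setU11.
  by rewrite !inE (negbTE aT) orbF => /eqP.
by rewrite cardsD (setIidPr sTA) cA cT; have -> : k.+1 - k.-1 = 2 by lia.
Qed.

(* The default value [B] is never taken when [U] is a unitrade and [x \in B]. *)
Definition partner U B x := odflt B [pick C in U | (C != B) && (B :\ x \subset C)].

Section Partners.
Variables (k : nat) (U : {set {set V}}).
Hypotheses (k_gt0 : 0 < k) (U_unitrade : unitrade k U).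

Lemma card_block B : B \in U -> #|B| = k.
Proof. exact: U_unitrade.1. Qed.

Lemma other_block B T :
  B \in U -> T \subset B -> #|T| = k.-1 -> exists2 C, C \in U & (C != B) && (T \subset C).
Proof.
move=> BU sTB cT; have := U_unitrade.2 T cT; rewrite (cardsD1 B) inE BU sTB.
have [->|[C]] := set_0Vmem ([set C in U | T \subset C] :\ B); first by rewrite cards0.
by rewrite !inE => /and3P[CB CU sTC] _; exists C; rewrite ?CB.
Qed.

Lemma partnerP B x : B \in U -> x \in B ->
  [/\ partner U B x \in U, partner U B x != B & B :\ x \subset partner U B x].
Proof.
move=> BU xB; rewrite /partner; case: pickP => [C /and3P[] //|none].
have cBx : #|B :\ x| = k.-1 by have := cardsD1 x B; rewrite xB card_block //; lia.
have [C CU /andP[CB sBC]] := other_block BU (subD1set B x) cBx.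
by have := none C; rewrite CU CB sBC.
Qed.

Lemma partnerE B x : B \in U -> x \in B ->
  exists2 w, w \notin B & partner U B x = w |: (B :\ x).
Proof.
move=> BU xB; have [NU NB sBN] := partnerP BU xB.
have cN : #|partner U B x| = #|B :\ x|.+1.
  by have := cardsD1 x B; rewrite xB (card_block BU) (card_block NU); lia.
have [w wBx NE] := setU1_of_card sBN cN; exists w => //.
apply: contra NB => wB; rewrite NE; suff -> : w = x by rewrite setD1K.
by apply/eqP; move: wBx; rewrite !inE wB andbT negbK eq_sym.
Qed.

Lemma partner_notin B x : B \in U -> x \in B -> x \notin partner U B x.
Proof.
move=> BU xB; have [w wB ->] := partnerE BU xB.
by rewrite !inE eqxx /= orbF; apply: contraNneq wB => <-.
Qed.

Lemma partner_inj B : B \in U -> {in B &, injective (partner U B)}.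
Proof.
move=> BU x y xB yB Nxy; apply: contraTeq (partner_notin BU yB) => xy.
have [_ _ /subsetP sBN] := partnerP BU xB.
by rewrite negbK -Nxy sBN // !inE eq_sym xy.
Qed.

Lemma partner_family B : B \in U ->
  B |: partner U B @: B \subset U /\ #|B |: partner U B @: B| = k.+1.
Proof.
move=> BU; split.
  by rewrite subUset sub1set BU; apply/subsetP => _ /imsetP[x xB ->]; case: (partnerP BU xB).
rewrite cardsU1 card_in_imset; last exact: partner_inj.
suff -> : B \notin partner U B @: B by rewrite card_block.
by apply/imsetP => -[x xB NB]; case: (partnerP BU xB); rewrite -NB eqxx.
Qed.

Lemma card_unitrade_gt : U != set0 -> k < #|U|.
Proof.
case/set0Pn => B BU; have [sYU cY] := partner_family BU.
by rewrite -cY subset_leq_card.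
Qed.

Lemma card_cover_gt : U != set0 -> k < #|cover U|.
Proof.
case/set0Pn => B BU; have /card_gt0P[x xB] : 0 < #|B| by rewrite card_block.
have [w wB NE] := partnerE BU xB; have [NU _ _] := partnerP BU xB.
have: w |: B \subset cover U.
  rewrite subUset sub1set (bigcup_sup B BU) andbT; apply/bigcupP.
  by exists (partner U B x); rewrite // NE setU11.
by move/subset_leq_card; rewrite cardsU1 wB card_block.
Qed.

Lemma unitrade_card_succ :
  #|U| = k.+1 -> exists2 A : {set V}, #|A| = k.+1 & U = ksubsets A k.
Proof.
move=> cU; have /card_gt0P[B BU] : 0 < #|U| by rewrite cU.
have [sYU cY] := partner_family BU.
have UE : U = B |: partner U B @: B by apply/esym/eqP; rewrite eqEcard sYU cU cY /=.
have /card_gt0P[x0 x0B] : 0 < #|B| by rewrite card_block.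
have [w wB N0E] := partnerE BU x0B; have [N0U _ _] := partnerP BU x0B.
have w_partner y : y \in B -> w \in partner U B y.
  move=> yB; have [->|yx0] := eqVneq y x0; first by rewrite N0E setU11.
  have yN0 : y \in partner U B x0 by rewrite N0E !inE yx0 yB orbT.
  have cT : #|partner U B x0 :\ y| = k.-1.
    by have := cardsD1 y (partner U B x0); rewrite yN0 (card_block N0U); lia.
  have [C CU /andP[CN0 sTC]] := other_block N0U (subD1set _ y) cT.
  have wC : w \in C.
    by apply: (subsetP sTC); rewrite N0E !inE eqxx andbT; apply: contraNneq wB => ->.
  move: CU; rewrite {1}UE !inE => /orP[/eqP CB|/imsetP[z zB Cz]].
    by rewrite -CB wC in wB.
  suff zy : z = y by rewrite -zy -Cz.
  apply: contraTeq (partner_notin BU zB) => zy; rewrite negbK -Cz (subsetP sTC) //.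
  have zx0 : z != x0 by apply: contraNneq CN0 => zx0; rewrite Cz zx0.
  by rewrite !inE zy N0E !inE zx0 zB orbT.
have cwB : #|w |: B| = k.+1 by rewrite cardsU1 wB card_block.
exists (w |: B) => //; apply/eqP; rewrite eqEcard card_ksubsets_succ // cU leqnn andbT.
apply/subsetP => C CU; rewrite inE (card_block CU) eqxx andbT.
move: CU; rewrite UE !inE => /orP[/eqP->|/imsetP[y yB ->]]; first exact: subsetUr.
have [wy wyB NyE] := partnerE BU yB; rewrite NyE.
have <- : w = wy.
  by move: (w_partner y yB); rewrite NyE !inE (negbTE wB) andbF orbF => /eqP.
by rewrite setUS // subD1set.
Qed.

End Partners.

Lemma card_link U v : #|link U v| = #|star U v|.
Proof.
apply: card_in_imset => B C; rewrite !inE => /andP[_ vB] /andP[_ vC] BC.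
by rewrite -(setD1K vB) -(setD1K vC) BC.
Qed.

Lemma unitrade_link k U v : 1 < k -> unitrade k U -> unitrade k.-1 (link U v).
Proof.
move=> k_gt1 [U_card U_even]; split=> [C /imsetP[B]|T cT].
  by rewrite inE => /andP[BU vB] ->; have := cardsD1 v B; rewrite vB U_card //; lia.
have [vT|vT] := boolP (v \in T).
  suff -> : [set C in link U v | T \subset C] = set0 by rewrite cards0.
  apply/setP => C; rewrite !inE; apply/negP => /andP[/imsetP[B _ ->] /subsetP/(_ v vT)].
  by rewrite setD11.
have -> : [set C in link U v | T \subset C] =
          [set B :\ v | B in [set B in U | v |: T \subset B]].
  apply/setP => C; rewrite inE; apply/andP/imsetP => [[/imsetP[B]]|[B]].
    rewrite inE => /andP[BU vB] -> sTB; exists B => //.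
    by rewrite inE BU subUset sub1set vB (subset_trans sTB (subD1set B v)).
  rewrite inE subUset sub1set => /and3P[BU vB sTB] ->; split.
    by apply/imsetP; exists B; rewrite // inE BU vB.
  by rewrite subsetD1 sTB.
rewrite card_in_imset; first by apply: U_even; rewrite cardsU1 vT cT; lia.
move=> B C; rewrite !inE => /andP[_ /subsetP sB] /andP[_ /subsetP sC] BC.
by rewrite -(setD1K (sB v (setU11 _ _))) -(setD1K (sC v (setU11 _ _))) BC.
Qed.

Lemma in_cover_star U v : (v \in cover U) = (0 < #|star U v|).
Proof.
apply/bigcupP/card_gt0P => [[B BU vB]|[B]]; first by exists B; rewrite inE BU.
by rewrite inE => /andP[BU vB]; exists B.
Qed.

Lemma degree_sum_bound k U d : unitrade k U ->
  {in cover U, forall v, d <= #|star U v|} -> #|cover U| * d <= #|U| * k.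
Proof.
move=> [U_card _] deg.
have -> : #|U| * k = \sum_v #|star U v|.
  rewrite -sum_nat_const -(eq_bigr _ U_card); under [RHS]eq_bigr do rewrite -sum1_card.
  rewrite (exchange_big_dep (mem U)) /=; last by move=> v B _; rewrite inE => /andP[].
  by apply: eq_bigr => B BU; rewrite -sum1_card; apply: eq_bigl => v; rewrite inE BU.
rewrite -sum_nat_const [leqRHS](bigID (mem (cover U))) /=.
by apply: leq_trans (leq_addr _ _); apply: leq_sum.
Qed.

Lemma ksubsets_of_star_card k U v : 2 < k -> unitrade k U -> #|star U v| = k ->
  exists2 A : {set V}, #|A| = k.+1 & k <= #|U :&: ksubsets A k|.
Proof.
move=> k_gt2 hU cv; have hL := unitrade_link v (ltnW k_gt2) hU.
have cL : #|link U v| = k.-1.+1 by rewrite card_link cv; lia.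
have k1_gt0 : 0 < k.-1 by lia.
have [A0 cA0 LE] := unitrade_card_succ k1_gt0 hL cL.
have vA0 : v \notin A0.
  apply/negP => vA0; have /card_gt0P[a /setD1P[av aA0]] : 0 < #|A0 :\ v|.
    by have := cardsD1 v A0; rewrite vA0 cA0; lia.
  have : A0 :\ a \in link U v.
    by rewrite LE inE subD1set /=; have := cardsD1 a A0; rewrite aA0 cA0; lia.
  by case/imsetP => B _ BE; move: (setD11 v B); rewrite -BE !inE eq_sym av vA0.
have cA : #|v |: A0| = k.+1 by rewrite cardsU1 vA0 cA0; lia.
exists (v |: A0) => //; rewrite -{1}cv subset_leq_card //; apply/subsetP => B.
rewrite !inE => /andP[BU vB]; rewrite BU (card_block hU BU) eqxx andbT.
have : B :\ v \in link U v by apply: imset_f; rewrite inE BU.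
by rewrite LE inE => /andP[sB _]; rewrite -(setD1K vB) setUS.
Qed.

Lemma degree_dichotomy k U : 2 < k ->
    (forall W : {set {set V}}, unitrade k.-1 W -> W != set0 -> #|W| < 2 * k.-1 ->
       #|W| = k.-1.+1) ->
    unitrade k U ->
  (exists v, #|star U v| = k) \/ {in cover U, forall v, 2 * k.-1 <= #|star U v|}.
Proof.
move=> k_gt2 small hU.
have [/existsP[v /eqP cv]|] := boolP [exists v, #|star U v| == k]; first by left; exists v.
rewrite negb_exists => /forallP no_k; right => v; rewrite in_cover_star => sv.
rewrite leqNgt; apply/negP => lt; have hL := unitrade_link v (ltnW k_gt2) hU.
have := small _ hL; rewrite card_link (ltn_predK k_gt2) -card_gt0 card_link.
by move=> /(_ sv lt) cv; have := no_k v; rewrite cv eqxx.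
Qed.

Lemma card_unitrade_small k : 1 < k -> forall U : {set {set V}},
  unitrade k U -> U != set0 -> #|U| < 2 * k -> #|U| = k.+1.
Proof.
elim: k => // k IH Sk_gt1 U hU U0 U_small.
have U_gt := card_unitrade_gt (ltnW Sk_gt1) hU U0.
have [k_gt1|] := ltnP 1 k; last by lia.
have k_gt2 : 2 < k.+1 by [].
apply/eqP; apply: contraT => /eqP U_neq.
have [[v cv]|deg] := degree_dichotomy k_gt2 (IH k_gt1) hU.
  have [A cA cUA] := ksubsets_of_star_card k_gt2 hU cv.
  have cD := card_symdiff U (ksubsets A k.+1).
  have cUA' := subset_leq_card (subsetIr U (ksubsets A k.+1)).
  rewrite (card_ksubsets_succ cA) in cD cUA'.
  have D0 : symdiff U (ksubsets A k.+1) != set0 by rewrite -card_gt0; lia.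
  have hD := unitrade_symdiff hU (unitrade_ksubsets (ltn0Sn k) cA).
  by have := card_unitrade_gt (ltn0Sn k) hD D0; lia.
have := degree_sum_bound hU deg; have := card_cover_gt (ltnW Sk_gt1) hU U0.
nia.
Qed.

Lemma card_setD2_family S P : P \subset S ->
  #|[set S :\ x :\ y | x in P, y in S :\: P]| = #|P| * #|S :\: P|.
Proof.
move=> sPS; rewrite curry_imset2X card_in_imset ?cardsX // => -[x y] [x' y'].
rewrite !inE /= => /andP[xP /andP[yP yS]] /andP[x'P /andP[y'P y'S]] E.
have xS := subsetP sPS x xP; have x'S := subsetP sPS x' x'P.
have : x \notin S :\ x' :\ y' by rewrite -E !inE eqxx andbF.
have : y \notin S :\ x :\ y by rewrite !inE eqxx.
rewrite E !inE xS yS !andbT !negb_and !negbK.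
case/orP=> [/eqP yy'|/eqP yx']; case/orP=> [/eqP xy'|/eqP xx'].
- by move: y'P; rewrite -xy' xP.
- by rewrite xx' yy'.
- by move: y'P; rewrite -xy' xP.
- by move: yP; rewrite yx' x'P.
Qed.

Section CodimensionTwo.
Variables (k : nat) (S : {set V}) (U : {set {set V}}).
Hypotheses (cS : #|S| = k.+2) (hU : unitrade k U) (sUS : forall B, B \in U -> B \subset S).

(* Every block is S minus two points, so U is the complement of a graph on S. *)
Let adj x y := S :\ x :\ y \in U.

Lemma block_setD2 B : B \in U -> exists x y, [/\ x \in S, y \in S & B = S :\ x :\ y].
Proof.
move=> BU; have sBS := sUS BU.
have /cards2P[x [y [_ SBE]]] : #|S :\: B| == 2.
  by rewrite cardsD (setIidPr sBS) cS (card_block hU BU); apply/eqP; lia.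
have /setDP[xS _] : x \in S :\: B by rewrite SBE !inE eqxx.
have /setDP[yS _] : y \in S :\: B by rewrite SBE !inE eqxx orbT.
exists x, y; split => //.
by rewrite setDDl -SBE setDDr setDv set0U (setIidPr sBS).
Qed.

Lemma adj_sym x y : adj x y = adj y x.
Proof. by rewrite /adj setD1C. Qed.

Lemma adj_irrefl x : adj x x = false.
Proof.
apply/negbTE/negP => /(card_block hU).
have -> : S :\ x :\ x = S :\ x by apply/setP => t; rewrite !inE andbA andbb.
by have := cardsD1 x S; rewrite cS; lia.
Qed.

Lemma adj_triangle x y z : x \in S -> y \in S -> z \in S -> x != y -> x != z -> y != z ->
  ~~ odd (adj y z + adj x z + adj x y).
Proof.
move=> xS yS zS xy xz yz; set T := S :\ x :\ y :\ z.
have yx : y != x by rewrite eq_sym.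
have zx : z != x by rewrite eq_sym.
have zy : z != y by rewrite eq_sym.
have Tx : T = S :\ y :\ z :\ x by rewrite /T [S :\ x :\ y]setD1C setD1C.
have Ty : T = S :\ x :\ z :\ y by rewrite /T setD1C.
have cT : #|T|.+1 = k.
  have := cardsD1 x S; rewrite (cardsD1 y (S :\ x)) (cardsD1 z (S :\ x :\ y)) !inE.
  by rewrite xS yS zS yx zx zy cS -/T; lia.
have blocksE : [set B in U | T \subset B] =
    [set B in [:: S :\ y :\ z; S :\ x :\ z; S :\ x :\ y] | B \in U].
  apply/setP => B; rewrite !inE [in RHS]andbC; apply: andb_id2l => BU.
  apply/idP/idP => [sTB|].
    have [w wT BE] := setU1_of_card sTB (etrans (card_block hU BU) (esym cT)).
    have wS : w \in S by rewrite (subsetP (sUS BU)) // BE setU11.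
    move: wT; rewrite BE !inE wS andbT !negb_and !negbK.
    case/or3P=> /eqP->; [rewrite setD1K | rewrite Ty setD1K | rewrite Tx setD1K];
      by rewrite ?eqxx ?orbT // !inE ?xS ?yS ?zS ?xy ?xz ?yz ?yx ?zx ?zy.
  by case/or3P => /eqP->; [rewrite Tx | rewrite Ty | ]; apply: subD1set.
have uniq3 : uniq [:: S :\ y :\ z; S :\ x :\ z; S :\ x :\ y].
  rewrite /= !inE !negb_or andbT -andbA; apply/and3P; split; apply/eqP => /setP.
  - by move/(_ x); rewrite !inE eqxx xS xy xz.
  - by move/(_ x); rewrite !inE eqxx xS xy xz.
  - by move/(_ y); rewrite !inE eqxx yS yz eq_sym xy.
have cT' : #|T| = k.-1 by rewrite -cT.
by have := hU.2 T cT'; rewrite blocksE card_set_seq //= addn0 addnA.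
Qed.

Lemma adj_cut p x y : p \in S -> x \in S -> y \in S -> adj x y = adj p x (+) adj p y.
Proof.
move=> pS xS yS; have [<-|xy] := eqVneq x y; first by rewrite adj_irrefl addbb.
have [<-|px] := eqVneq p x; first by rewrite adj_irrefl.
have [<-|py] := eqVneq p y; first by rewrite adj_irrefl addbF adj_sym.
have := adj_triangle pS xS yS px py xy.
by case: (adj x y); case: (adj p y); case: (adj p x).
Qed.

Lemma unitrade_codim2 :
  exists2 P : {set V}, P \subset S & U = [set S :\ x :\ y | x in P, y in S :\: P].
Proof.
have /card_gt0P[p pS] : 0 < #|S| by rewrite cS.
exists [set t in S | ~~ adj p t]; first by apply/subsetP => t; rewrite inE => /andP[].
apply/setP => B; apply/idP/imset2P => [BU|[x y]]; last first.
  rewrite !inE => /andP[xS pxF] /andP[pyT yS] ->; rewrite yS /= negbK in pyT.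
  by rewrite -/(adj x y) (adj_cut pS xS yS) (negbTE pxF) pyT.
have [a [b [aS bS BE]]] := block_setD2 BU.
move: BU; rewrite BE -/(adj a b) (adj_cut pS aS bS).
case pa: (adj p a) => /= pb.
  by exists b a; [rewrite !inE bS pb | rewrite !inE aS pa | rewrite setD1C].
by exists a b; rewrite // !inE ?aS ?bS ?pa ?pb.
Qed.

End CodimensionTwo.
End Unitrades.

Section Transport.
Variables T V : finType.
Implicit Types (A : {set T}) (P Q : {set V}).

Lemma nth_inj_ord n (s : seq V) x0 :
  uniq s -> size s = n -> injective (fun i : 'I_n => nth x0 s i).
Proof. by move=> s_uniq ss i j /eqP; rewrite nth_uniq ?ss // => /eqP/val_inj. Qed.

Lemma imset_ksubsets (f : T -> V) A (k : nat) :
  injective f -> [set f @: (B : {set T}) | B in ksubsets A k] = ksubsets (f @: A) k.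
Proof.
move=> f_inj; apply/setP => C; rewrite inE; apply/imsetP/andP => [[B]|[sCfA /eqP cC]].
  by rewrite inE => /andP[sBA /eqP cB] ->; rewrite imsetS // card_imset // cB.
have fBC : f @: [set x in A | f x \in C] = C.
  apply/setP => y; apply/imsetP/idP => [[x]|yC]; first by rewrite inE => /andP[_ ?] ->.
  have /imsetP[x xA yE] := subsetP sCfA y yC.
  by exists x; rewrite // inE xA -yE.
exists [set x in A | f x \in C]; last by rewrite fBC.
rewrite inE -(card_imset _ f_inj) fBC cC eqxx andbT.
by apply/subsetP => x; rewrite inE => /andP[].
Qed.

Lemma imset_eq_of_cover (f : T -> V) A P Q : [disjoint P & Q] ->
  f @: A \subset P -> f @: (~: A) \subset Q -> P \subset f @: setT -> f @: A = P.
Proof.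
move=> dPQ sAP sAQ sPf; apply/eqP; rewrite eqEsubset sAP; apply/subsetP => x xP.
have /imsetP[i _ xE] := subsetP sPf x xP; rewrite xE in xP *.
have [iA|iA] := boolP (i \in A); first exact: imset_f.
by move: (disjointFr dPQ xP); rewrite (subsetP sAQ) // imset_f // inE.
Qed.

End Transport.

Lemma equivalent_W5 (V : finType) (A : {set V}) : #|A| = 6 -> equivalent W5 (ksubsets A 5).
Proof.
move=> cA; have /card_gt0P[x0 _] : 0 < #|A| by rewrite cA.
have size_e : size (enum A) = 6 by rewrite -cardE.
pose f (i : 'I_6) := nth x0 (enum A) i.
have f_inj : injective f := nth_inj_ord (enum_uniq _) size_e.
have fT : f @: setT = A.
  apply/eqP; rewrite eqEcard card_imset // cardsT card_ord cA leqnn andbT.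
  by apply/subsetP => _ /imsetP[i _ ->]; rewrite -mem_enum mem_nth ?size_e.
have W5E : W5 = ksubsets [set: 'I_6] 5 by apply/setP => B; rewrite !inE subsetT.
by exists f; rewrite W5E imset_ksubsets // fT.
Qed.

Lemma eq_lab (i : 'I_7) k : k.-1 < 7 -> (i == lab k) = (val i == k.-1).
Proof. by move=> hk; rewrite -val_eqE /= inordK. Qed.

Ltac sets_I7 := apply/setP => -[[|[|[|[|[|[|[|?]]]]]]] ?] //; rewrite !inE ?eq_lab.

Lemma S7E : S7 = [set [set: 'I_7] :\ i :\ j | i in [set i : 'I_7 | i < 4],
                                              j in ~: [set i : 'I_7 | i < 4]].
Proof.
have -> : S7 = [set [set: 'I_7] :\ lab 4 :\ lab 7; [set: 'I_7] :\ lab 3 :\ lab 7;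
  [set: 'I_7] :\ lab 2 :\ lab 7; [set: 'I_7] :\ lab 1 :\ lab 7;
  [set: 'I_7] :\ lab 4 :\ lab 6; [set: 'I_7] :\ lab 3 :\ lab 6;
  [set: 'I_7] :\ lab 2 :\ lab 6; [set: 'I_7] :\ lab 1 :\ lab 6;
  [set: 'I_7] :\ lab 4 :\ lab 5; [set: 'I_7] :\ lab 3 :\ lab 5;
  [set: 'I_7] :\ lab 2 :\ lab 5; [set: 'I_7] :\ lab 1 :\ lab 5].
  by rewrite /S7; repeat f_equal; sets_I7.
have -> : [set i : 'I_7 | i < 4] = [set lab 1; lab 2; lab 3; lab 4] by sets_I7.
have -> : ~: [set lab 1; lab 2; lab 3; lab 4] = [set lab 5; lab 6; lab 7] by sets_I7.
apply/setP => B; apply/idP/idP => [|/imset2P[i j]].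
  by rewrite !inE; repeat case/orP; move/eqP->; apply: imset2_f; rewrite !inE eqxx ?orbT.
by rewrite !inE -!orbA => /or4P[]/eqP-> /or3P[]/eqP-> ->; rewrite eqxx ?orbT.
Qed.

Lemma equivalent_S7 (V : finType) (P Q : {set V}) :
  #|P| = 4 -> #|Q| = 3 -> [disjoint P & Q] ->
  equivalent S7 [set (P :|: Q) :\ x :\ y | x in P, y in Q].
Proof.
move=> cP cQ dPQ; have /card_gt0P[x0 _] : 0 < #|P| by rewrite cP.
have sizeP : size (enum P) = 4 by rewrite -cardE.
have sizeQ : size (enum Q) = 3 by rewrite -cardE.
pose f (i : 'I_7) := nth x0 (enum P ++ enum Q) i.
have f_inj : injective f.
  apply: nth_inj_ord; last by rewrite size_cat sizeP sizeQ.
  rewrite cat_uniq !enum_uniq andbT /=; apply/hasPn => x; rewrite !mem_enum => xQ.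
  by rewrite (disjointFl dPQ xQ).
set I4 := [set i : 'I_7 | i < 4].
have fI4 : f @: I4 \subset P.
  apply/subsetP => y /imsetP[i]; rewrite inE => i4 ->.
  by rewrite /f nth_cat sizeP i4 -mem_enum mem_nth ?sizeP.
have fJ3 : f @: (~: I4) \subset Q.
  apply/subsetP => y /imsetP[i]; rewrite !inE -leqNgt => i4 ->.
  rewrite /f nth_cat sizeP ltnNge i4 /= -mem_enum mem_nth // sizeQ.
  by have := ltn_ord i; lia.
have fT : f @: setT = P :|: Q.
  apply/eqP; rewrite eqEcard card_imset // cardsT card_ord -(setUCr I4) imsetU setUSS //=.
  by have [] := leq_card_setU P Q; rewrite cP cQ.
have fP : f @: I4 = P by apply: imset_eq_of_cover dPQ fI4 fJ3 _; rewrite fT subsetUl.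
have fQ : f @: (~: I4) = Q.
  apply: (imset_eq_of_cover (P := Q) (Q := P)); rewrite ?setCK // 1?disjoint_sym //.
  by rewrite fT subsetUr.
exists f; split => //.
have := imset2_imset (fun x y => (P :|: Q) :\ x :\ y) f f I4 (~: I4); rewrite fP fQ => <-.
rewrite S7E imset_imset2; apply: eq_in_imset2 => i j _ _ /=.
by rewrite !imsetD1 // fT.
Qed.

Section TwiceMinimalSize.
Variables (V : finType) (k : nat) (U : {set {set V}}).
Hypotheses (k_gt3 : 3 < k) (hU : unitrade k U) (cU : #|U| = 2 * k.+1).

Lemma two_ksubsets_of_star_card v : #|star U v| = k ->
  exists A A' : {set V}, [/\ #|A| = k.+1, #|A'| = k.+1,
    ksubsets A k :&: ksubsets A' k = set0 & U = ksubsets A k :|: ksubsets A' k].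
Proof.
have k_gt0 : 0 < k by lia.
move=> cv; have [A cA cUA] := ksubsets_of_star_card (ltnW k_gt3) hU cv.
have cW := card_ksubsets_succ cA; have hW := unitrade_ksubsets k_gt0 cA.
move WE : (ksubsets A k) cUA cW hW => W cUA cW hW.
have hD := unitrade_symdiff hU hW.
have cD : #|symdiff U W| + 2 * #|U :&: W| = #|U| + #|W| := card_symdiff U W.
have cUW : #|U :&: W| <= #|W| := subset_leq_card (subsetIr U W).
have [cUWk|cUWk] : #|U :&: W| = k \/ #|U :&: W| = k.+1 by lia.
  have D0 : symdiff U W != set0 by rewrite -card_gt0; lia.
  have D_small : #|symdiff U W| < 2 * k by lia.
  by have := card_unitrade_small (ltnW (ltnW k_gt3)) hD D0 D_small; lia.
have UW : U :&: W = W by apply/eqP; rewrite eqEcard subsetIr cUWk cW leqnn.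
have DE : symdiff U W = U :\: W.
  by rewrite /symdiff -{2}UW setDIl setDv set0I setU0.
rewrite DE in hD cD.
have cUD : #|U :\: W| = k.+1 by lia.
have [A' cA' UWE] := unitrade_card_succ k_gt0 hD cUD.
exists A, A'; rewrite WE -UWE; split=> //.
  by rewrite setIDA setIC UW setDv.
by rewrite setUDK // -UW subsetIl.
Qed.

Lemma card_cover_of_min_degree :
  {in cover U, forall v, 2 * k.-1 <= #|star U v|} -> #|cover U| = k.+2.
Proof.
move=> deg; have k_gt0 : 0 < k by lia.
have U0 : U != set0 by rewrite -card_gt0 cU.
have := degree_sum_bound hU deg; have := card_cover_gt k_gt0 hU U0.
have sU : U \subset ksubsets (cover U) k.
  by apply/subsetP => B BU; rewrite inE (bigcup_sup B BU) (card_block hU BU) eqxx.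
have [/card_ksubsets_succ cK|] := eqVneq #|cover U| k.+1.
  by have := subset_leq_card sU; rewrite cK cU; lia.
rewrite cU; nia.
Qed.

End TwiceMinimalSize.

Lemma equivalent_S7_of_cover (V : finType) (U : {set {set V}}) :
  unitrade 5 U -> #|U| = 12 -> #|cover U| = 7 -> equivalent S7 U.
Proof.
move=> hU cU cS; set S := cover U.
have [P sPS UE] := unitrade_codim2 cS hU (fun B BU => bigcup_sup B BU).
wlog cP : P sPS UE / #|P| = 4.
  move=> gen; have cPQ := card_setD2_family sPS; rewrite -UE cU in cPQ.
  have cSP : #|S :\: P| = 7 - #|P| by rewrite cardsD (setIidPr sPS) cS.
  have cP_cases : #|P| = 4 \/ #|P| = 3.
    have : #|P| <= 7 by rewrite -cS subset_leq_card.
    by rewrite cSP in cPQ; move: #|P| cPQ => [|[|[|[|[|[|[|[|p]]]]]]]]; lia.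
  have [|cP3] := cP_cases; first exact: gen.
  apply: (gen (S :\: P)); [exact: subsetDl | | lia].
  rewrite setDDr setDv set0U (setIidPr sPS) {1}UE.
  by apply/setP => B; apply/imset2P/imset2P => -[x y xP yQ ->]; exists y x => //; apply: setD1C.
have dP : [disjoint P & S :\: P].
  by have /subsetDP[_] := subxx (S :\: P); rewrite disjoint_sym.
have cQ : #|S :\: P| = 3 by rewrite cardsD (setIidPr sPS) cS cP.
by rewrite {1}UE -{1}(setUDK sPS); apply: equivalent_S7.
Qed.

Theorem proposition14 (V : finType) (U : {set {set V}}) :
  unitrade 5 U -> #|U| = 12 ->
  (exists W W' : {set {set V}},
      [/\ U = W :|: W', W :&: W' = set0,
          unitrade 5 W /\ equivalent W5 W &
          unitrade 5 W' /\ equivalent W5 W'])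
  \/ equivalent S7 U.
Proof.
move=> hU cU.
have [[v cv]|deg] := degree_dichotomy (isT : 2 < 5) (@card_unitrade_small V 4 isT) hU.
  left; have [A [A' [cA cA' dAA' UE]]] := two_ksubsets_of_star_card (isT : 3 < 5) hU cU cv.
  exists (ksubsets A 5), (ksubsets A' 5); split=> //; split;
    by [apply: unitrade_ksubsets | apply: equivalent_W5].
right; have c7 := card_cover_of_min_degree (isT : 3 < 5) hU cU deg.
exact: equivalent_S7_of_cover hU cU c7.
Qed.
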